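(* Let $n\geq 0$ and $0\leq l,m\leq n$ be integers. Then, as an identity of rational functions in $q$ and $z$, \[ \sum_{\substack{k=0\\ k\neq m}}^{n}{n\brack k}\frac{(q/z;q)_k (zq^{-l};q)_{n-k}}{1-q^{k-m}} z^k =(-1)^m q^{\binom{m+1}{2}}{n\brack m}(zq^{-l};q)_l(zq^{-m};q)_{n-l}\left(\sum_{k=0}^{n-l-1}\frac{zq^{k-m}}{1-zq^{k-m}} - \sum_{\substack{k=0\\ k\neq m}}^{n}\frac{q^{k-m}}{1-q^{k-m}} \right). \]
   Context: For $N\geq 0$, $(x;q)_N=(1-x)(1-xq)\cdots(1-xq^{N-1})$ (with $(x;q)_0=1$). The $q$-binomial coefficient is ${n\brack k}=\frac{(q;q)_n}{(q;q)_k(q;q)_{n-k}}$ for $0\leq k\leq n$ and $0$ otherwise. *)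

From HB Require Import structures.
From mathcomp Require Import all_boot all_order all_algebra.
Set Implicit Arguments. Unset Strict Implicit. Unset Printing Implicit Defensive.
Import Order.TTheory GRing.Theory Num.Theory.
Local Open Scope ring_scope.

Definition qpoch (R : ringType) (x q : R) (N : nat) : R :=
  \prod_(i < N) (1 - x * q ^+ i).

Definition qbinom (R : unitRingType) (q : R) (n k : nat) : R :=
  if (k <= n)%N then qpoch q q n / (qpoch q q k * qpoch q q (n - k)) else 0.

(* The field Q(q) of rational functions in q, and Q(q)(z) = Q(q,z). *)
Definition Fq := {fraction {poly rat}}.
Definition Fqz := {fraction {poly Fq}}.

Definition qv : Fqz := tofrac ((tofrac ('X : {poly rat}) : Fq)%:P).
Definition zv : Fqz := tofrac ('X : {poly Fq}).

From HB Require Import structures.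
From mathcomp Require Import all_boot all_order all_algebra.
From mathcomp Require Import ring zify.
Set Implicit Arguments. Unset Strict Implicit. Unset Printing Implicit Defensive.
Import Order.TTheory GRing.Theory Num.Theory.
Local Open Scope ring_scope.

(* With the nodes x_k = q^-k (0 <= k <= n), their weights
   w_k = prod_(j != k) (x_k - x_j) and A(y) = prod_(i < n - l) (1 - z q^i y),
   a polynomial of degree n - l <= n, the k-th summand on the left equals
   -(z q^-l;q)_l (q^-1;q^-1)_n A(x_k) / ((x_m - x_k) w_k), while the two sums
   on the right are -x_m A'(x_m) / A(x_m) and -x_m sum_(j != m) 1 / (x_m - x_j).
   The identity thus becomes the value at x_m of the derivative of the Lagrange
   interpolation formula for A on these nodes.  It holds over any field in
   which q is not a root of unity and z is no power q^(b - a), and Q(q, z) is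
   such a field. *)

Lemma deriv_prod (R : comNzRingType) (I : eqType) (r : seq I) (P : pred I)
    (f : I -> {poly R}) : uniq r ->
  (\prod_(i <- r | P i) f i)^`() =
  \sum_(i <- r | P i) (f i)^`() * \prod_(j <- r | P j && (j != i)) f j.
Proof.
elim: r => [|a r IHr] /=; first by rewrite !big_nil derivC.
case/andP => a_notin_r uniq_r.
have neq_a i : i \in r -> a != i by apply: contraTneq => <-.
rewrite !big_cons; case Pa: (P a) => /=; last first.
  rewrite (IHr uniq_r) [LHS]big_seq_cond [RHS]big_seq_cond.
  by apply: eq_bigr => i /andP[/neq_a a_i _]; rewrite big_cons Pa.
rewrite eqxx derivM (IHr uniq_r) mulr_sumr; congr (_ + _).
  congr (_ * _); rewrite big_seq_cond [RHS]big_seq_cond; apply: eq_bigl => j.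
  by case r_j: (j \in r); rewrite ?andbF //= (eq_sym j) neq_a ?andbT.
rewrite [LHS]big_seq_cond [RHS]big_seq_cond.
by apply: eq_bigr => i /andP[/neq_a a_i _]; rewrite big_cons Pa a_i /= mulrCA.
Qed.

Section NodeDerivative.
Variables (F : fieldType) (x : nat -> F) (n : nat).
Hypothesis x_inj : injective x.

Definition node_weight (k : 'I_n.+1) := \prod_(j < n.+1 | j != k) (x k - x j).

Lemma node_sub_neq0 (i j : 'I_n.+1) : i != j -> x i - x j != 0.
Proof. by rewrite subr_eq0 (inj_eq x_inj) (inj_eq val_inj). Qed.

Lemma node_weight_neq0 k : node_weight k != 0.
Proof. by apply/prodf_neq0 => j; rewrite eq_sym; apply: node_sub_neq0. Qed.

Let node_poly (k : 'I_n.+1) := \prod_(j < n.+1 | j != k) ('X - (x j)%:P).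

Let horner_node_poly (k : 'I_n.+1) y :
  (node_poly k).[y] = \prod_(j < n.+1 | j != k) (y - x j).
Proof. by rewrite horner_prod; apply: eq_bigr => j _; rewrite hornerXsubC. Qed.

Let node_weight_split {m i : 'I_n.+1} : i != m ->
  node_weight m = (x m - x i) * \prod_(j < n.+1 | (j != m) && (j != i)) (x m - x j).
Proof. by move=> im; rewrite /node_weight (bigD1 i) //= eq_sym. Qed.

Let deriv_node_poly_off (m i : 'I_n.+1) : i != m ->
  (node_poly i)^`().[x m] = node_weight m / (x m - x i).
Proof.
move=> im; rewrite (node_weight_split im) mulrAC divff ?mul1r; last first.
  by rewrite node_sub_neq0 // eq_sym.
rewrite /node_poly (bigD1 m) 1?eq_sym //= derivM derivXsubC mul1r.
rewrite hornerD hornerM hornerXsubC subrr mul0r addr0.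
by rewrite horner_prod; apply: eq_big => [j|j _]; rewrite ?hornerXsubC // andbC.
Qed.

Let deriv_node_poly_diag (m : 'I_n.+1) :
  (node_poly m)^`().[x m] = node_weight m * \sum_(j < n.+1 | j != m) (x m - x j)^-1.
Proof.
rewrite deriv_prod ?index_enum_uniq // horner_sum mulr_sumr.
apply: eq_bigr => i im; rewrite derivXsubC mul1r (node_weight_split im) mulrAC.
by rewrite divff ?mul1r ?node_sub_neq0 1?eq_sym // horner_prod; apply: eq_bigr => j _;
  rewrite hornerXsubC.
Qed.

Lemma deriv_horner_node (m : 'I_n.+1) (A : {poly F}) : (size A <= n.+1)%N ->
  A^`().[x m] =
    node_weight m * \sum_(k < n.+1 | k != m) A.[x k] / ((x m - x k) * node_weight k)
    + A.[x m] * \sum_(j < n.+1 | j != m) (x m - x j)^-1.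
Proof.
move=> sA; rewrite {1}(lagrange_gen (ltn0Sn n) x_inj sA).
rewrite raddf_sum horner_sum (bigD1 m) //= addrC mulr_sumr.
have lagrange_node (k : 'I_n.+1) :
    tnth (lagrange n.+1 x) k = ((node_weight k)^-1)%:P * node_poly k :> {poly F}.
  by rewrite (lagrangeE (ltn0Sn n) x_inj) /= horner_node_poly.
congr (_ + _); last first.
  rewrite lagrange_node !deriv_mulC !hornerCM deriv_node_poly_diag.
  by rewrite mulKf ?node_weight_neq0.
apply: eq_bigr => k km; rewrite lagrange_node !deriv_mulC !hornerCM.
rewrite deriv_node_poly_off // invfM; field.
by rewrite node_weight_neq0 node_sub_neq0 // eq_sym.
Qed.
End NodeDerivative.

Section QPochhammer.
Variable R : nzRingType.
Implicit Types x b : R.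

Lemma qpoch0 x b : qpoch x b 0 = 1.
Proof. by rewrite /qpoch big_ord0. Qed.

Lemma qpochSr x b k : qpoch x b k.+1 = qpoch x b k * (1 - x * b ^+ k).
Proof. by rewrite /qpoch big_ord_recr. Qed.

Lemma qpochSl x b k : qpoch x b k.+1 = (1 - x) * qpoch (x * b) b k.
Proof.
rewrite /qpoch big_ord_recl mulr1; congr (_ * _).
by apply: eq_bigr => i _; rewrite /= exprS mulrA.
Qed.

Lemma qpochD x b u v : qpoch x b (u + v) = qpoch x b u * qpoch (x * b ^+ u) b v.
Proof.
rewrite /qpoch big_split_ord; congr (_ * _).
by apply: eq_bigr => i _; rewrite /= exprD mulrA.
Qed.
End QPochhammer.

Lemma bin2_addS k d : 'C((k + d).+1, 2) = ('C(k.+1, 2) + 'C(d.+1, 2) + k * d)%N.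
Proof.
elim: d => [|d IHd]; first by rewrite !addn0 muln0 addn0.
rewrite addnS (binS (k + d).+1) bin1 IHd (binS d.+1) bin1; lia.
Qed.

Section QNodes.
Variables (R : comNzRingType) (b : R).

Lemma prod_qnode_below k :
  \prod_(0 <= j < k) (b ^+ k - b ^+ j) = (-1) ^+ k * b ^+ 'C(k, 2) * qpoch b b k.
Proof.
elim: k => [|k IHk]; first by rewrite big_geq // qpoch0 bin0n !mulr1.
rewrite big_nat_recl // (eq_bigr (fun j => b * (b ^+ k - b ^+ j))); last first.
  by move=> j _; rewrite !exprS mulrBr.
rewrite big_split /= prodr_const_nat subn0 IHk qpochSr (binS k) bin1 exprD.
rewrite !exprS; ring.
Qed.

Lemma prod_qnode_above k d :
  \prod_(0 <= i < d) (b ^+ k - b ^+ (i + k.+1)) = b ^+ (k * d) * qpoch b b d.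
Proof.
rewrite (eq_bigr (fun i => b ^+ k * (1 - b * b ^+ i))); last first.
  by move=> i _; rewrite addnS exprS exprD; ring.
by rewrite big_split /= prodr_const_nat subn0 exprM big_mkord.
Qed.
End QNodes.

Lemma qnode_weightE (F : fieldType) (b : F) n (k : 'I_n.+1) :
  b ^+ k * node_weight (fun j => b ^+ j) k =
  (-1) ^+ k * b ^+ ('C(k.+1, 2) + k * (n - k)) * qpoch b b k * qpoch b b (n - k).
Proof.
have split_k : node_weight (fun j => b ^+ j) k =
    \prod_(0 <= j < k) (b ^+ k - b ^+ j) *
    \prod_(0 <= i < n - k) (b ^+ k - b ^+ (i + k.+1)).
  rewrite /node_weight (eq_bigl (fun j : 'I_n.+1 => val j != k)) //.
  rewrite -(big_mkord (fun j => j != k) (fun j => b ^+ k - b ^+ j)).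
  rewrite (big_cat_nat _ (n := k)) //= 1?ltnW //; congr (_ * _).
    rewrite big_nat_cond [RHS]big_nat_cond; apply: eq_bigl => j.
    by case: ltnP => jk; rewrite ?andbF // andbT ltn_eqF.
  rewrite big_ltn_cond // eqxx /= -{1}(add0n k.+1) big_addn subSS.
  by apply: eq_bigl => i; rewrite gtn_eqF // addnS ltnS leq_addl.
rewrite split_k prod_qnode_below prod_qnode_above (binS k) bin1 !exprD.
ring.
Qed.

Section LinearFactors.
Variables (F : fieldType) (c : nat -> F).

Definition lin_prod N : {poly F} := \prod_(i < N) (1 - (c i)%:P * 'X).

Lemma horner_lin_prod N y : (lin_prod N).[y] = \prod_(i < N) (1 - c i * y).
Proof.
rewrite horner_prod; apply: eq_bigr => i _.
by rewrite hornerD hornerN hornerCM hornerX hornerC.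
Qed.

Lemma size_lin_prod N : (size (lin_prod N) <= N.+1)%N.
Proof.
elim: N => [|N IHN]; first by rewrite /lin_prod big_ord0 size_poly1.
rewrite /lin_prod big_ord_recr /=; apply: leq_trans (size_polyMleq _ _) _.
have size_fac : (size (1 - (c N)%:P * 'X)%R <= 2)%N.
  rewrite addrC -mulNr -polyCN size_MXaddC.
  by case: ifP => // _; rewrite ltnS size_polyC_leq1.
by rewrite -subn1 leq_subLR (leq_trans (leq_add IHN size_fac)) // addn2.
Qed.

Lemma lin_prod_log_deriv N y : (forall i, 1 - c i * y != 0) ->
  - y * (lin_prod N)^`().[y] =
  (lin_prod N).[y] * \sum_(i < N) c i * y / (1 - c i * y).
Proof.
move=> nz; rewrite deriv_prod ?index_enum_uniq // horner_sum !mulr_sumr.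
apply: eq_bigr => i _; rewrite horner_lin_prod [in RHS](bigD1 i) //=.
rewrite hornerM horner_prod.
rewrite derivB derivC deriv_mulC derivX sub0r mulr1 hornerN hornerC.
under eq_bigr do rewrite hornerD hornerN hornerCM hornerX hornerC.
by field; rewrite nz.
Qed.
End LinearFactors.

Section QIdentity.
Variables (F : fieldType) (q z : F).
Hypotheses (q_neq0 : q != 0) (z_neq0 : z != 0)
  (q_not_root1 : forall k, (0 < k)%N -> q ^+ k != 1)
  (zq_neq_q : forall a b : nat, z * q ^+ a != q ^+ b).
Local Notation p := q^-1.
Local Notation w k := (node_weight (fun j => p ^+ j) k).
Local Notation A N := (lin_prod (fun i => z * q ^+ i) N).

Lemma qexp_inj : injective (fun k : nat => q ^+ k).
Proof.
suff neq_lt a b : (a < b)%N -> q ^+ a != q ^+ b.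
  by move=> a b /= eq_ab; case: (ltngtP a b) => // /neq_lt; rewrite eq_ab eqxx.
move=> ab; rewrite -(subnKC (ltnW ab)) exprD -{1}[q ^+ a]mulr1.
by rewrite (inj_eq (mulfI (expf_neq0 _ q_neq0))) eq_sym q_not_root1 ?subn_gt0.
Qed.

Lemma qinv_exp_inj : injective (fun k : nat => p ^+ k).
Proof. by move=> a b /= /(congr1 GRing.inv); rewrite !exprVn !invrK => /qexp_inj. Qed.

Lemma qexp_eq a b : (q ^+ a == q ^+ b) = (a == b).
Proof. exact: (inj_eq qexp_inj). Qed.

Lemma qpoch_inv_neq0 k : qpoch p p k != 0.
Proof.
apply/prodf_neq0 => i _; rewrite -exprS subr_eq0 eq_sym exprVn invr_eq1.
exact: q_not_root1.
Qed.

Lemma qpoch_qqE k : qpoch q q k = (-1) ^+ k * q ^+ 'C(k.+1, 2) * qpoch p p k.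
Proof.
elim: k => [|k IHk]; first by rewrite !qpoch0 mulr1 mul1r.
rewrite !qpochSr IHk (binS k.+1) bin1 exprD -!exprS exprVn [(-1) ^+ k.+1]exprS.
set c := 'C(k.+1, 2); by field; rewrite expf_neq0.
Qed.

Lemma qbinom_node_weight n (k : 'I_n.+1) :
  qbinom q n k * ((-1) ^+ k * q ^+ 'C(k.+1, 2)) *
    (p ^+ k * w k) = qpoch p p n.
Proof.
rewrite qnode_weightE /qbinom -ltnS ltn_ord !qpoch_qqE.
move: (nat_of_ord k) (ltn_ord k) => {}k /ltnSE kn.
have [d ->] : exists d, n = (k + d)%N by exists (n - k)%N; rewrite subnKC.
have nz_pk := qpoch_inv_neq0 k; have nz_pd := qpoch_inv_neq0 d.
rewrite addKn bin2_addS !exprD !exprVn.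
set ck := 'C(k.+1, 2); set cd := 'C(d.+1, 2).
(* [field] cannot see that (-1) ^+ k squares to 1. *)
transitivity (qpoch p p (k + d) * ((-1) ^+ k * (-1) ^+ k)).
  by field; rewrite !expf_eq0 (negbTE q_neq0) oppr_eq0 oner_eq0 !andbF nz_pk nz_pd.
by rewrite -{2}[(-1) ^+ k]mulr1 signrMK mulr1.
Qed.

Lemma one_sub_zq_neq0 a b : 1 - z * q ^+ a * p ^+ b != 0.
Proof.
rewrite subr_eq0 eq_sym exprVn -(inj_eq (mulIf (expf_neq0 b q_neq0))).
by rewrite divfK ?expf_neq0 // mul1r.
Qed.

Lemma qexp_inv_eq a b c d : (a + d = b + c)%N -> q ^+ a * p ^+ b = q ^+ c * p ^+ d.
Proof.
move=> abcd; rewrite !exprVn; apply/eqP.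
by rewrite eqr_div ?expf_neq0 // -!exprD abcd addnC.
Qed.

Lemma qpoch_exchange n l k : (l <= n)%N -> (k <= n)%N ->
  z ^+ k * (qpoch (q / z) q k * qpoch (z * p ^+ l) q (n - k)) =
  (-1) ^+ k * q ^+ 'C(k.+1, 2) * (qpoch (z * p ^+ l) q l * qpoch (z * p ^+ k) q (n - l)).
Proof.
move=> ln; elim: k => [|k IHk] kn.
  rewrite !qpoch0 !mulr1 !mul1r subn0 -{1}(subnKC ln) qpochD -mulrA.
  by rewrite exprVn mulVf ?expf_neq0 ?mulr1.
have {IHk} := IHk (ltnW kn).
set c := 1 - z * q ^+ (n - l) * p ^+ k.+1.
have shift_l : qpoch (z * p ^+ l) q (n - k) = qpoch (z * p ^+ l) q (n - k.+1) * c.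
  rewrite -(subnSK kn) qpochSr /c -!mulrA; congr (_ * (1 - z * _)).
  by rewrite mulrC; apply: qexp_inv_eq; lia.
have shift_k : qpoch (z * p ^+ k.+1) q (n - l) * c =
    (1 - z * p ^+ k.+1) * qpoch (z * p ^+ k) q (n - l).
  rewrite /c (mulrAC z) -qpochSr qpochSl; congr (_ * qpoch _ _ _).
  by rewrite exprS -mulrA mulrAC mulVf // mul1r.
move=> IHk; apply: (mulIf (one_sub_zq_neq0 (n - l) k.+1)); rewrite -/c.
rewrite -!mulrA -shift_l shift_k.
transitivity ((z - q ^+ k.+1) *
    (z ^+ k * (qpoch (q / z) q k * qpoch (z * p ^+ l) q (n - k)))).
  by rewrite qpochSr !exprS; field.
rewrite IHk (binS k.+1) bin1 exprD [(-1) ^+ k.+1]exprS !exprVn.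
set C := 'C(k.+1, 2); by field; rewrite expf_neq0.
Qed.

Lemma horner_zq_prod N k : (A N).[p ^+ k] = qpoch (z * p ^+ k) q N.
Proof. by rewrite horner_lin_prod; apply: eq_bigr => i _; rewrite mulrAC. Qed.

Lemma horner_zq_prod_neq0 N k : (A N).[p ^+ k] != 0.
Proof.
by rewrite horner_lin_prod; apply/prodf_neq0 => i _; rewrite one_sub_zq_neq0.
Qed.

Lemma lhs_summandE n l (k : 'I_n.+1) m : (l <= n)%N -> k != m :> nat ->
  qbinom q n k * (qpoch (q / z) q k * qpoch (z * p ^+ l) q (n - k))
    / (1 - q ^+ k * p ^+ m) * z ^+ k =
  - (qpoch (z * p ^+ l) q l * qpoch p p n) *
    ((A (n - l)).[p ^+ k] / ((p ^+ m - p ^+ k) * w k)).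
Proof.
move=> ln km; have kn : (k <= n)%N by rewrite -ltnS.
rewrite mulrAC -[_ * _ * z ^+ k]mulrA [_ * z ^+ k]mulrC (qpoch_exchange ln kn).
rewrite -(qbinom_node_weight k) horner_zq_prod !exprVn.
have wk_neq0 := node_weight_neq0 qinv_exp_inj k.
set C := 'C(k.+1, 2).
field; rewrite wk_neq0 !expf_eq0 (negbTE q_neq0) !andbF mulNr mul1r !subr_eq0.
by rewrite !qexp_eq /=; apply/andP; split; rewrite // eq_sym.
Qed.

Lemma sum_qratio n (m : 'I_n.+1) :
  \sum_(0 <= k < n.+1 | k != m) q ^+ k * p ^+ m / (1 - q ^+ k * p ^+ m) =
  - (p ^+ m * \sum_(j < n.+1 | j != m) (p ^+ m - p ^+ j)^-1).
Proof.
rewrite mulr_sumr -sumrN big_mkord; apply: eq_bigr => k km; rewrite !exprVn.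
field; rewrite !expf_eq0 (negbTE q_neq0) !andbF mulNr mul1r !subr_eq0 !qexp_eq /=.
by apply/andP; split; rewrite // eq_sym.
Qed.

Lemma sum_zqratio N m :
  \sum_(0 <= k < N) z * (q ^+ k * p ^+ m) / (1 - z * (q ^+ k * p ^+ m)) =
  - (p ^+ m * (A N)^`().[p ^+ m]) / (A N).[p ^+ m].
Proof.
rewrite big_mkord -mulNr lin_prod_log_deriv => [|i]; last exact: one_sub_zq_neq0.
rewrite mulrC mulKf ?horner_zq_prod_neq0 //.
by apply: eq_bigr => i _; rewrite !mulrA.
Qed.

Theorem qidentity n l m : (l <= n)%N -> (m <= n)%N ->
  \sum_(0 <= k < n.+1 | k != m)
     qbinom q n k * (qpoch (q / z) q k * qpoch (z * p ^+ l) q (n - k))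
       / (1 - q ^+ k * p ^+ m) * z ^+ k
  = (-1) ^+ m * q ^+ 'C(m.+1, 2) * qbinom q n m
      * qpoch (z * p ^+ l) q l * qpoch (z * p ^+ m) q (n - l)
      * (\sum_(0 <= k < n - l) z * (q ^+ k * p ^+ m) / (1 - z * (q ^+ k * p ^+ m))
         - \sum_(0 <= k < n.+1 | k != m) q ^+ k * p ^+ m / (1 - q ^+ k * p ^+ m)).
Proof.
move=> ln mn; pose mo : 'I_n.+1 := Ordinal (mn : (m < n.+1)%N).
have size_A : (size (A (n - l)) <= n.+1)%N.
  by rewrite (leq_trans (size_lin_prod _ _)) // ltnS leq_subr.
rewrite big_mkord; under eq_bigr => k km do rewrite (lhs_summandE ln km).
rewrite -mulr_sumr (eq_bigl (fun k : 'I_n.+1 => k != mo)) // (sum_qratio mo) sum_zqratio.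
rewrite (deriv_horner_node qinv_exp_inj mo size_A) -(horner_zq_prod _ m).
rewrite -(qbinom_node_weight mo) /=.
set C := 'C(m.+1, 2); by field; apply: horner_zq_prod_neq0.
Qed.
End QIdentity.

Lemma exprz_subn (F : fieldType) (q : F) : q != 0 ->
  forall a b : nat, q ^ (a%:Z - b%:Z) = q ^+ a * q^-1 ^+ b.
Proof. by move=> q_neq0 a b; rewrite expfzDr // -exprnN exprVn. Qed.

Lemma exprz_oppn (F : fieldType) (q : F) (b : nat) : q ^ (- b%:Z) = q^-1 ^+ b.
Proof. by rewrite -exprnN exprVn. Qed.

Local Notation Xq := (tofrac ('X : {poly rat}) : Fq).

Lemma qv_neq0 : qv != 0.
Proof. by rewrite /qv !tofrac_eq0 polyC_eq0 tofrac_eq0 polyX_eq0. Qed.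

Lemma zv_neq0 : zv != 0.
Proof. by rewrite /zv tofrac_eq0 polyX_eq0. Qed.

Lemma qvX k : qv ^+ k = tofrac ((Xq ^+ k)%:P).
Proof. by rewrite /qv -!rmorphXn. Qed.

Lemma qv_not_root1 k : (0 < k)%N -> qv ^+ k != 1.
Proof.
move=> k_gt0; rewrite qvX -tofrac1 tofrac_eq -polyC1 (inj_eq polyC_inj).
rewrite -rmorphXn -tofrac1 tofrac_eq.
apply/negP => /eqP/(congr1 (fun r : {poly rat} => size r)).
by rewrite size_polyXn size_poly1; case: k k_gt0.
Qed.

Lemma zv_qv_neq a b : zv * qv ^+ a != qv ^+ b.
Proof.
rewrite !qvX /zv -rmorphM tofrac_eq; apply/negP => /eqP eq_ab.
have := size_polyC_leq1 (Xq ^+ b); rewrite -eq_ab size_XmulC //.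
by rewrite expf_neq0 // tofrac_eq0 polyX_eq0.
Qed.

Theorem theorem1p1 (n l m : nat) (hl : (l <= n)%N) (hm : (m <= n)%N) :
  \sum_(0 <= k < n.+1 | k != m)
     qbinom qv n k
       * (qpoch (qv / zv) qv k * qpoch (zv * qv ^ (- (l%:Z))) qv (n - k))
       / (1 - qv ^ (k%:Z - m%:Z)) * zv ^+ k
  = (-1) ^+ m * qv ^+ 'C(m.+1, 2) * qbinom qv n m
      * qpoch (zv * qv ^ (- (l%:Z))) qv l
      * qpoch (zv * qv ^ (- (m%:Z))) qv (n - l)
      * (\sum_(0 <= k < n - l) zv * qv ^ (k%:Z - m%:Z) / (1 - zv * qv ^ (k%:Z - m%:Z))
         - \sum_(0 <= k < n.+1 | k != m) qv ^ (k%:Z - m%:Z) / (1 - qv ^ (k%:Z - m%:Z))).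
Proof.
rewrite !exprz_oppn.
under eq_bigr do rewrite (exprz_subn qv_neq0).
under [\sum_(0 <= k < n - l) _]eq_bigr do rewrite (exprz_subn qv_neq0).
under [\sum_(0 <= k < n.+1 | k != m) (qv ^ _ / _)]eq_bigr do rewrite (exprz_subn qv_neq0).
exact: qidentity qv_neq0 zv_neq0 qv_not_root1 zv_qv_neq n l m hl hm.
Qed.
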